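(* The condition $C_2$ is not maximal in general: for $n=2$ (three processes), $t=1$, $k=1$ and values $V=\{0,1\}$, there is a condition $C'$ with $C_2\subsetneq C'$ such that consensus ($1$-set agreement) is solvable on $C'\times R^1_2$ (for instance $C'=C_2\cup\{(1,1,0)\}$).
   Context: Fix processes $\Pi_n=\{0,\dots,n\}$. $ImS_n$ is the set of directed graphs $G$ on $\Pi_n$ containing all self-loops such that in-neighbourhoods $In_G(a)=\{b:(b,a)\in A(G)\}$ are totally ordered by inclusion and $(a,b),(b,c)\in A(G)\Rightarrow(a,c)\in A(G)$; $IIS_n=ImS_n^\omega$. In an execution $\iota.w$, $w=G_1G_2\cdots$, processes start with inputs from $\iota$, and in round $r$ process $q$ receives the state of $p$ iff $(p,q)\in A(G_r)$, then updates its state. $Q(w)$ is the set of processes heard by every process in infinitely many rounds; the iterated $t$-resilient model is $R^t_n=\{w\in IIS_n:|Q(w)|\ge n+1-t\}$. An input vector is a map $I:\Pi_n\to V$, written $(I(0),\dots,I(n))$; a condition is a set of input vectors. $k$-set agreement over $V$: each process must decide a value that is the input of some process, and at most $k$ distinct values are decided; it is solvable on $C\times R^t_n$ if some algorithm achieves this, every process deciding after finitely many rounds, for every $I\in C$, $w\in R^t_n$. A condition $C$ is maximal if $k$-set agreement is solvable on $C\times R^t_n$ but not on $C'\times R^t_n$ for any $C'\supsetneq C$. For an input vector $I$, let $\#a_1\ge\#a_2\ge\dots$ be the numbers of occurrences of the distinct values of $I$ in nonincreasing order (with $\#a_i=0$ beyond the number of distinct values). $C_2$ is the set of input vectors with $\sum_{i=1}^{k}\#a_i-k\cdot\#a_{k+1}>t$.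 *)

From mathcomp Require Import all_boot all_order all_algebra.
From mathcomp Require Import boolp.
Set Implicit Arguments. Unset Strict Implicit. Unset Printing Implicit Defensive.
Import GRing.Theory Num.Theory.

(* Processes Pi_n = {0,...,n} are 'I_n.+1.
   A directed graph on Pi_n is given by its arc relation: G a b <-> (a,b) in A(G). *)
Definition graph (n : nat) := 'I_n.+1 -> 'I_n.+1 -> bool.

Definition In_nb n (G : graph n) (a : 'I_n.+1) : pred 'I_n.+1 := fun b => G b a.

Definition subset_nb n (A B : pred 'I_n.+1) := forall x, A x -> B x.

Definition ImS n (G : graph n) : Prop :=
  [/\ (forall a, G a a),
      (forall a b, subset_nb (In_nb G a) (In_nb G b) \/ subset_nb (In_nb G b) (In_nb G a))
    & (forall a b c, G a b -> G b c -> G a c)].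

(* An infinite word w = G_1 G_2 ...; round r+1 uses graph w r. *)
Definition word n := nat -> graph n.

Definition IIS n (w : word n) : Prop := forall r, ImS (w r).

Definition Q n (w : word n) : pred 'I_n.+1 :=
  fun p => `[< forall m, exists2 r, m <= r & forall q, w r p q >].

Definition R_model n t (w : word n) : Prop := IIS w /\ n.+1 - t <= #|Q w|.

Definition input (n : nat) (V : finType) := {ffun 'I_n.+1 -> V}.
Definition condition (n : nat) (V : finType) := {set input n V}.

(* A (deterministic) algorithm: arbitrary local state space, initial state from
   process identity and input, a round update from the states received
   (Some s from p iff (p,q) is an arc of the round graph), and a decision map. *)
Record algorithm (n : nat) (V : finType) := Algorithm {
  St : Type;
  init : 'I_n.+1 -> V -> St;
  update : 'I_n.+1 -> ('I_n.+1 -> option St) -> St;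
  decide : 'I_n.+1 -> St -> option V }.
Arguments init {n V} a _ _.
Arguments update {n V} a _ _.
Arguments decide {n V} a _ _.

Fixpoint state n V (A : algorithm n V) (I : input n V) (w : word n) (r : nat)
  : 'I_n.+1 -> St A :=
  match r with
  | 0 => fun p => init A p (I p)
  | r'.+1 => fun q =>
      update A q (fun p => if w r' p q then Some (@state n V A I w r' p) else None)
  end.

Arguments state {n V} A I w r.

Definition decides_at n V (A : algorithm n V) (I : input n V) (w : word n)
  (q : 'I_n.+1) (r : nat) (v : V) : Prop :=
  decide A q (state A I w r q) = Some v /\
  forall r', r' < r -> decide A q (state A I w r' q) = None.

Definition solves n t k V (A : algorithm n V) (C : condition n V) : Prop :=
  forall I w, I \in C -> R_model t w ->
    [/\ (forall q, exists r v, decides_at A I w q r v),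
        (forall q r v, decides_at A I w q r v -> exists p, I p = v)
      & (exists D : seq V, size D <= k /\
           forall q r v, decides_at A I w q r v -> v \in D)].

Definition solvable n t k V (C : condition n V) : Prop :=
  exists A : algorithm n V, solves t k A C.

Definition maximal n t k V (C : condition n V) : Prop :=
  solvable t k C /\ forall C' : condition n V, C \proper C' -> ~ solvable t k C'.

(* #a_1 >= #a_2 >= ... : multiplicities of the distinct values of I, sorted
   nonincreasingly; mult I i is #a_(i+1) (0 beyond the number of distinct values). *)
Definition mults n V (I : input n V) : seq nat :=
  sort geq [seq count_mem v (codom I) | v <- undup (codom I)].

Definition mult n V (I : input n V) (i : nat) : nat := nth 0 (mults I) i.

Definition C2 n t k (V : finType) : condition n V :=
  [set I : input n V |
    (t%:Z < (\sum_(i < k) (mult I i)%:Z) - (k * mult I k)%:Z)%R].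

From mathcomp Require Import all_boot all_order all_algebra.
From mathcomp Require Import boolp.

Set Implicit Arguments.
Unset Strict Implicit.
Unset Printing Implicit Defensive.

(* For n = 2, t = 1, k = 1 the condition C_2 consists of the constant inputs, and
   C' adds (1,1,0).  Consensus on C' is solved by letting process 2 hide its input
   when it is 0 and letting every process adopt the first value it hears: on every
   input of C' all values ever known equal the common input of processes 0 and 1.
   Since |Q(w)| >= 2, some process other than 2 is infinitely often heard by
   everybody, so every process eventually learns a value. *)

Lemma decides_at_first n V (A : algorithm n V) I w q :
  (exists r, decide A q (state A I w r q) != None) ->
  exists r v, decides_at A I w q r v.
Proof.
case/ex_minnP=> r; case Er: (decide A q _) => [v|] // _ minr.
exists r, v; split=> // r' lt_r'r; apply/eqP; apply: contraTT lt_r'r.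
by rewrite -leqNgt; apply: minr.
Qed.

Lemma solves_consensus n t V (A : algorithm n V) (C : condition n V) :
  (forall I w, I \in C -> R_model t w ->
    (forall q, exists r, decide A q (state A I w r q) != None) /\
    exists p, forall q r v, decide A q (state A I w r q) = Some v -> v = I p) ->
  solves t 1 A C.
Proof.
move=> H I w IC Rw; have [decided [p agree]] := H I w IC Rw.
split=> [q | q r v [/agree-> _] | ]; first exact: decides_at_first.
  by exists p.
by exists [:: I p]; split=> // q r v [/agree-> _]; rewrite mem_seq1.
Qed.

Section AdoptFirst.

Variables (n : nat) (V : finType) (silent : 'I_n.+1 -> V -> bool).

Definition heard_values (f : 'I_n.+1 -> option (option V)) : seq V :=
  pmap (fun p => if f p is Some s then s else None) (enum 'I_n.+1).

(* The state [None] means that no value is known yet; the decision is the known value. *)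
Definition adopt_first : algorithm n V :=
  @Algorithm n V (option V) (fun p v => if silent p v then None else Some v)
    (fun _ f => ohead (heard_values f)) (fun _ s => s).

Lemma heard_valuesP f p y : f p = Some (Some y) -> y \in heard_values f.
Proof. by move=> fp; rewrite mem_pmap; apply/mapP; exists p; rewrite ?mem_enum ?fp. Qed.

Lemma adopt_first_heard f p y : f p = Some (Some y) -> ohead (heard_values f) != None.
Proof. by move/heard_valuesP; case: (heard_values f). Qed.

Variables (I : input n V) (w : word n).

Lemma adopt_first_value v r p x :
  (forall q, ~~ silent q (I q) -> I q = v) ->
  state adopt_first I w r p = Some x -> x = v.
Proof.
move=> unan; elim: r p x => [|r IHr] p x /=.
  by case: ifPn => // /unan <- [].
case Eh: (heard_values _) => [|y s] //= [<-].
have: y \in heard_values (fun q => if w r q p then Some (state adopt_first I w r q) else None).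
  by rewrite Eh mem_head.
rewrite mem_pmap => /mapP [q _]; case: (w r q p) => //.
by case Eq: (state _ _ _ _ _) => [z|] // -[->]; apply: IHr Eq.
Qed.

Lemma adopt_first_known_step r p q :
  w r p q -> state adopt_first I w r p != None -> state adopt_first I w r.+1 q != None.
Proof.
move=> wpq /=; case Ep: (state _ _ _ _ p) => [y|] // _.
by apply: (@adopt_first_heard _ p y); rewrite wpq Ep.
Qed.

Lemma adopt_first_known r p :
  IIS w -> state adopt_first I w 0 p != None -> state adopt_first I w r p != None.
Proof.
move=> Hw known0; elim: r => // r; apply: adopt_first_known_step.
by have [loop _ _] := Hw r; apply: loop.
Qed.

Lemma adopt_first_terminates p q :
  IIS w -> p \in Q w -> ~~ silent p (I p) ->
  exists r, state adopt_first I w r q != None.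
Proof.
move=> Hw /asboolP /(_ 0) [r _ heard] loud; exists r.+1.
apply: adopt_first_known_step (heard q) _; apply: adopt_first_known => //=.
by rewrite (negbTE loud).
Qed.

End AdoptFirst.

Lemma adopt_first_solves n t (V : finType) (silent : 'I_n.+1 -> V -> bool) (C : condition n V) :
  (forall I, I \in C -> exists p, forall q, ~~ silent q (I q) -> I q = I p) ->
  (forall I w, I \in C -> R_model t w -> exists2 p, p \in Q w & ~~ silent p (I p)) ->
  solves t 1 (adopt_first silent) C.
Proof.
move=> unan live; apply: solves_consensus => I w IC Rw; split.
  have [p Qp loud] := live I w IC Rw.
  by move=> q; apply: adopt_first_terminates Qp loud; case: Rw.
have [p unan_p] := unan I IC.
by exists p => q r v; apply: adopt_first_value.
Qed.

Definition silent_at n (V : eqType) (p0 : 'I_n.+1) (v0 : V) p v := (p == p0) && (v == v0).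

Lemma R_model_Q_avoid n t (w : word n) p0 :
  t < n -> R_model t w -> exists2 p, p \in Q w & p != p0.
Proof.
move=> lt_tn [_ le_Q]; have /card_gt1P [p [q [Qp Qq neq_pq]]] : 1 < #|Q w|.
  by apply: leq_trans le_Q; rewrite ltn_subRL addn1 ltnS.
have [eq_p | neq_p] := eqVneq p p0; last by exists p.
by exists q; rewrite // -eq_p eq_sym.
Qed.

Lemma codom_constant (T : finType) (U : eqType) (f : T -> U) p q :
  constant (codom f) -> f p = f q.
Proof.
case/(constantP (f p)) => x Ef.
have: f p \in codom f by apply: codom_f.
have: f q \in codom f by apply: codom_f.
by rewrite Ef !mem_nseq => /andP [_ /eqP->] /andP [_ /eqP->].
Qed.

Lemma codom_input3 V (I : input 2 V) : codom I = [:: I ord0; I (inord 1); I ord_max].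
Proof.
rewrite codomE !enum_ordSl enum_ord0 /=.
by congr [:: I _; I _; I _]; apply/val_inj; rewrite /= ?inordK.
Qed.

Lemma C2_binary3E (I : input 2 'I_2) : (I \in C2 2 1 1 'I_2) = constant (codom I).
Proof.
rewrite inE big_ord1 mul1n /mult /mults codom_input3.
case: (I ord0) (I (inord 1)) (I ord_max) => [[|[|//]] ?] [[|[|//]] ?] [[|[|//]] ?].
all: by vm_compute.
Qed.

Definition in110 : input 2 'I_2 :=
  [ffun i : 'I_3 => if i == inord 2 then inord 0 else inord 1].

Lemma in110E i : in110 i = if i == ord_max then ord0 else inord 1.
Proof.
have ord_maxE : inord 2 = ord_max :> 'I_3 by apply/val_inj; rewrite /= inordK.
by rewrite ffunE ord_maxE; case: eqP => // _; apply/val_inj; rewrite /= inordK.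
Qed.

Lemma in110_notin_C2 : in110 \notin C2 2 1 1 'I_2.
Proof.
rewrite C2_binary3E; apply/negP => /(codom_constant ord0 ord_max).
by rewrite !in110E eqxx => /(f_equal val); rewrite /= inordK.
Qed.

Lemma C2_in110_unanimous I q : I \in C2 2 1 1 'I_2 :|: [set in110] ->
  ~~ silent_at ord_max ord0 q (I q) -> I q = I ord0.
Proof.
rewrite in_setU in_set1 C2_binary3E => /orP [/(codom_constant q ord0)-> // | /eqP->].
by rewrite /silent_at !in110E; case: eqP.
Qed.

Theorem mainTheorem13 :
  let v110 : input 2 ('I_2) :=
    [ffun i : 'I_3 => if i == inord 2 then inord 0 else inord 1] in
  let C' := C2 2 1 1 ('I_2) :|: [set v110] in
  (C2 2 1 1 ('I_2) \proper C' /\ solvable 1 1 C') /\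
  ~ maximal 1 1 (C2 2 1 1 ('I_2)).
Proof.
move=> v110 C'.
have C2_properC' : C2 2 1 1 'I_2 \proper C'.
  apply/properP; split; first exact: subsetUl.
  by exists in110; [rewrite !inE eqxx orbT | exact: in110_notin_C2].
have solvableC' : solvable 1 1 C'.
  exists (adopt_first (silent_at ord_max ord0)); apply: adopt_first_solves.
    by move=> I IC'; exists ord0 => q; apply: C2_in110_unanimous.
  move=> I w _ /(R_model_Q_avoid ord_max (isT : 1 < 2)) [p Qp neq_p].
  by exists p; rewrite // /silent_at (negbTE neq_p).
by split=> // -[_ notC']; apply: (notC' C').
Qed.
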